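(* Fix $I_{12},I_{23},I_{31}\in[0,\infty)$. For $(u_1,u_2,u_3)\in\mathcal{U}_H^{123}$, let $\alpha_1,\alpha_2,\alpha_3$ be the inner angles, opposite to sides $l_1,l_2,l_3$ respectively, of the hyperbolic triangle with side lengths $l_1,l_2,l_3$. Then the Jacobian matrix $\left(\partial\alpha_i/\partial u_j\right)_{i,j=1}^3$ is negative definite at every point of $\mathcal{U}_H^{123}$.
   Context: Put $u_i=\ln\tanh(r_i/2)$ with $r_i>0$ for $i=1,2,3$. Let $l_1,l_2,l_3>0$ be given by $$\cosh l_1=\cosh r_2\cosh r_3+I_{23}\sinh r_2\sinh r_3,$$ $$\cosh l_2=\cosh r_3\cosh r_1+I_{31}\sinh r_3\sinh r_1,$$ $$\cosh l_3=\cosh r_1\cosh r_2+I_{12}\sinh r_1\sinh r_2.$$ The set $\mathcal{U}_H^{123}\subset(-\infty,0)^3$ is the set of $(u_1,u_2,u_3)$ for which $l_1,l_2,l_3$ satisfy the strict triangle inequalities. The Jacobian matrix $\left(\partial\alpha_i/\partial u_j\right)$ is symmetric. *)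

From Stdlib Require Import Reals Lra.
Open Scope R_scope.

Definition arcosh (x : R) : R := ln (x + sqrt (x * x - 1)).

(* r as a function of u, inverting u = ln (tanh (r/2)) for u < 0, r > 0:
   tanh (r/2) = exp u  <->  r = ln ((1 + exp u) / (1 - exp u)). *)
Definition r_of_u (u : R) : R := ln ((1 + exp u) / (1 - exp u)).

Definition len (I r r' : R) : R :=
  arcosh (cosh r * cosh r' + I * sinh r * sinh r').

Definition l1 (I12 I23 I31 u1 u2 u3 : R) : R := len I23 (r_of_u u2) (r_of_u u3).
Definition l2 (I12 I23 I31 u1 u2 u3 : R) : R := len I31 (r_of_u u3) (r_of_u u1).
Definition l3 (I12 I23 I31 u1 u2 u3 : R) : R := len I12 (r_of_u u1) (r_of_u u2).

(* inner angle opposite to side a in the hyperbolic triangle with sides a b c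
   (hyperbolic law of cosines) *)
Definition hangle (a b c : R) : R :=
  acos ((cosh b * cosh c - cosh a) / (sinh b * sinh c)).

(* alpha_i, i = 0,1,2 standing for 1,2,3 *)
Definition alpha (I12 I23 I31 : R) (i : nat) (u1 u2 u3 : R) : R :=
  let a := l1 I12 I23 I31 u1 u2 u3 in
  let b := l2 I12 I23 I31 u1 u2 u3 in
  let c := l3 I12 I23 I31 u1 u2 u3 in
  match i with
  | 0%nat => hangle a b c
  | 1%nat => hangle b c a
  | _ => hangle c a b
  end.

Definition U_H123 (I12 I23 I31 u1 u2 u3 : R) : Prop :=
  u1 < 0 /\ u2 < 0 /\ u3 < 0 /\
  let a := l1 I12 I23 I31 u1 u2 u3 in
  let b := l2 I12 I23 I31 u1 u2 u3 in
  let c := l3 I12 I23 I31 u1 u2 u3 in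
  a < b + c /\ b < c + a /\ c < a + b.

Definition section (f : R -> R -> R -> R) (j : nat) (u1 u2 u3 : R) : R -> R :=
  fun t => match j with
           | 0%nat => f t u2 u3
           | 1%nat => f u1 t u3
           | _ => f u1 u2 t
           end.

Definition neg_def3 (M : nat -> nat -> R) : Prop :=
  forall x : nat -> R, (x 0%nat <> 0 \/ x 1%nat <> 0 \/ x 2%nat <> 0) ->
    sum_f_R0 (fun i => sum_f_R0 (fun j => x i * M i j * x j) 2) 2 < 0.

From Stdlib Require Import Reals Lra Nsatz Lia.
Open Scope R_scope.

(* Write C_k = cosh l_k for the cosines of the sides.  The argument factors the
   Jacobian through these cosines.
   - Calculus.  Since r'(u) = sinh r, each C_k is a smooth function of two of the
     u_j with explicit positive partial derivatives D_kj ([side_rate]).  The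
     hyperbolic law of cosines gives d alpha_i / d C_k explicitly ([angle_rate]);
     it involves the Gram determinant 1 + 2 C0 C1 C2 - C0^2 - C1^2 - C2^2, which is
     positive exactly by the triangle inequalities.  With G the Gram matrix of the cosines and y = adj(G) x, the form
     x^T J x equals -(y^T S y) / (sqrt(Delta) Delta) where
     S = diag(1/(C_k^2 - 1)) (D_kj) G.  The matrix S is symmetric thanks to
     identities between the D_kj ([side_rates_symmetric]), and positive definite
     by Sylvester's criterion: positive diagonal, determinant
     det(D) Delta / prod (C_k^2 - 1) > 0, and one positive 2x2 principal minor,
     chosen using that at most one of the C_i C_j - C_k is negative. *)

Lemma dl_eq (f : R -> R) x l l' : l = l' -> derivable_pt_lim f x l -> derivable_pt_lim f x l'.
Proof. intros <-; auto. Qed.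

Lemma dl_add f g x a b : derivable_pt_lim f x a -> derivable_pt_lim g x b ->
  derivable_pt_lim (fun v => f v + g v) x (a + b).
Proof. apply derivable_pt_lim_plus. Qed.

Lemma dl_sub f g x a b : derivable_pt_lim f x a -> derivable_pt_lim g x b ->
  derivable_pt_lim (fun v => f v - g v) x (a - b).
Proof. apply derivable_pt_lim_minus. Qed.

Lemma dl_mul f g x a b : derivable_pt_lim f x a -> derivable_pt_lim g x b ->
  derivable_pt_lim (fun v => f v * g v) x (a * g x + f x * b).
Proof. apply derivable_pt_lim_mult. Qed.

Lemma dl_div f g x a b : derivable_pt_lim f x a -> derivable_pt_lim g x b -> g x <> 0 ->
  derivable_pt_lim (fun v => f v / g v) x ((a * g x - b * f x) / (g x * g x)).
Proof. apply derivable_pt_lim_div. Qed.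

Lemma dl_comp (h f : R -> R) x a c : derivable_pt_lim f x a -> derivable_pt_lim h (f x) c ->
  derivable_pt_lim (fun v => h (f v)) x (c * a).
Proof. apply (derivable_pt_lim_comp f h). Qed.

Lemma dl_acos x : -1 < x < 1 -> derivable_pt_lim acos x (-1 / sqrt (1 - x * x)).
Proof.
  intros Hx. pose proof (derive_pt_acos x Hx) as E. unfold Rsqr in E. rewrite <- E.
  destruct (derivable_pt_acos x Hx) as [l Hl]. exact Hl.
Qed.

Lemma cosh_sinh_sq x : cosh x * cosh x - sinh x * sinh x = 1.
Proof. unfold cosh, sinh. rewrite exp_Ropp. pose proof (exp_pos x). field. lra. Qed.

Lemma cosh_pos x : 0 < cosh x.
Proof. unfold cosh. pose proof (exp_pos x). pose proof (exp_pos (- x)). lra. Qed.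

Lemma sinh_pos x : 0 < x -> 0 < sinh x.
Proof. intros Hx. rewrite <- sinh_0. now apply sinh_lt. Qed.

Lemma cosh_gt1 x : 0 < x -> 1 < cosh x.
Proof.
  intros Hx. pose proof (cosh_sinh_sq x). pose proof (sinh_pos x Hx). pose proof (cosh_pos x).
  nra.
Qed.

Lemma cosh_plus x y : cosh (x + y) = cosh x * cosh y + sinh x * sinh y.
Proof. unfold cosh, sinh. rewrite Ropp_plus_distr, !exp_plus. field. Qed.

Lemma cosh_minus x y : cosh (x - y) = cosh x * cosh y - sinh x * sinh y.
Proof. unfold Rminus. rewrite cosh_plus. unfold cosh, sinh. rewrite Ropp_involutive. field. Qed.

Lemma cosh_even x : cosh (- x) = cosh x.
Proof. unfold cosh. rewrite Ropp_involutive, Rplus_comm. reflexivity. Qed.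

Lemma cosh_lt x y : 0 <= x -> x < y -> cosh x < cosh y.
Proof.
  intros Hx Hxy. pose proof (sinh_lt _ _ Hxy).
  assert (0 <= sinh x) by (destruct Hx as [Hx| <-]; [left; apply sinh_pos | rewrite sinh_0]; lra).
  pose proof (cosh_sinh_sq x). pose proof (cosh_sinh_sq y).
  pose proof (cosh_pos x). pose proof (cosh_pos y).
  nra.
Qed.

Lemma exp_neg_lt1 u : u < 0 -> exp u < 1.
Proof. intros. rewrite <- exp_0. now apply exp_increasing. Qed.

Lemma r_of_u_pos u : u < 0 -> 0 < r_of_u u.
Proof.
  intros Hu. pose proof (exp_neg_lt1 u Hu). pose proof (exp_pos u).
  unfold r_of_u. rewrite <- ln_1. apply ln_increasing; [lra|].
  apply Rlt_gt, (Rmult_lt_reg_r (1 - exp u)); [lra|]. field_simplify; lra.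
Qed.

Lemma sinh_r_of_u u : u < 0 -> sinh (r_of_u u) = 2 * exp u / ((1 - exp u) * (1 + exp u)).
Proof.
  intros Hu. pose proof (exp_neg_lt1 u Hu). pose proof (exp_pos u).
  unfold sinh, r_of_u. rewrite exp_Ropp, exp_ln by (apply Rdiv_lt_0_compat; lra).
  field. lra.
Qed.

Lemma derive_r_of_u u : u < 0 -> derivable_pt_lim r_of_u u (sinh (r_of_u u)).
Proof.
  intros Hu. pose proof (exp_neg_lt1 u Hu). pose proof (exp_pos u).
  eapply dl_eq.
  2: { apply (dl_comp ln (fun v => (1 + exp v) / (1 - exp v))).
       - apply dl_div; [apply dl_add | apply dl_sub | lra];
           solve [apply derivable_pt_lim_const | apply derivable_pt_lim_exp].
       - apply derivable_pt_lim_ln, Rdiv_lt_0_compat; lra. }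
  rewrite sinh_r_of_u by lra. field. lra.
Qed.

Lemma arcosh_spec X : 1 <= X ->
  cosh (arcosh X) = X /\ sinh (arcosh X) = sqrt (X * X - 1).
Proof.
  intros HX. assert (H0 : 0 <= X * X - 1) by nra.
  pose proof (sqrt_pos (X * X - 1)). pose proof (sqrt_sqrt _ H0).
  set (s := sqrt (X * X - 1)) in *.
  assert (Hinv : / (X + s) = X - s) by (field_simplify_eq; nra).
  unfold cosh, sinh, arcosh. fold s. rewrite exp_Ropp, exp_ln, Hinv by lra.
  split; field.
Qed.

Lemma arcosh_nonneg X : 1 <= X -> 0 <= arcosh X.
Proof.
  intros HX. pose proof (sqrt_pos (X * X - 1)).
  destruct (Rle_or_lt 0 (arcosh X)) as [|Hneg]; [assumption | exfalso].
  apply exp_increasing in Hneg. unfold arcosh in Hneg. rewrite exp_0, exp_ln in Hneg; lra.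
Qed.

Lemma derive_arcosh (x : R -> R) v d : derivable_pt_lim x v d -> 1 < x v ->
  derivable_pt_lim (fun w => arcosh (x w)) v (d / sqrt (x v * x v - 1)).
Proof.
  intros Hx H1. assert (H0 : 0 < x v * x v - 1) by nra.
  pose proof (sqrt_lt_R0 _ H0). pose proof (sqrt_sqrt _ (Rlt_le _ _ H0)).
  eapply dl_eq.
  2: { apply (dl_comp ln (fun w => x w + sqrt (x w * x w - 1))).
       - apply dl_add; [exact Hx|]. apply (dl_comp sqrt (fun w => x w * x w - 1)).
         + apply dl_sub; [apply dl_mul; exact Hx | apply derivable_pt_lim_const].
         + now apply derivable_pt_lim_sqrt.
       - apply derivable_pt_lim_ln; lra. }
  set (s := sqrt (x v * x v - 1)) in *. field. split; lra.
Qed.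

Lemma derive_cosh_arcosh (x : R -> R) v d : derivable_pt_lim x v d -> 1 < x v ->
  derivable_pt_lim (fun w => cosh (arcosh (x w))) v d.
Proof.
  intros Hx H1. assert (H0 : 0 < x v * x v - 1) by nra. pose proof (sqrt_lt_R0 _ H0).
  eapply dl_eq.
  2: { apply (dl_comp cosh (fun w => arcosh (x w)));
       [apply (derive_arcosh x v d Hx H1) | apply derivable_pt_lim_cosh]. }
  rewrite (proj2 (arcosh_spec (x v) ltac:(lra))). field. lra.
Qed.

Lemma derive_sinh_arcosh (x : R -> R) v d : derivable_pt_lim x v d -> 1 < x v ->
  derivable_pt_lim (fun w => sinh (arcosh (x w))) v (x v * d / sqrt (x v * x v - 1)).
Proof.
  intros Hx H1. assert (H0 : 0 < x v * x v - 1) by nra. pose proof (sqrt_lt_R0 _ H0).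
  eapply dl_eq.
  2: { apply (dl_comp sinh (fun w => arcosh (x w)));
       [apply (derive_arcosh x v d Hx H1) | apply derivable_pt_lim_sinh]. }
  rewrite (proj1 (arcosh_spec (x v) ltac:(lra))). field. lra.
Qed.

(* The cosine [side_cosh I p q] of the side between the circles of parameters
   p and q (so that [len I (r_of_u p) (r_of_u q) = arcosh (side_cosh I p q)]),
   and its directional derivative [side_rate] along a velocity (dp, dq). *)

Definition side_cosh (I p q : R) : R :=
  cosh (r_of_u p) * cosh (r_of_u q) + I * sinh (r_of_u p) * sinh (r_of_u q).

Definition side_rate (I p q dp dq : R) : R :=
  dp * (sinh (r_of_u p) * (sinh (r_of_u p) * cosh (r_of_u q) + I * cosh (r_of_u p) * sinh (r_of_u q)))
  + dq * (sinh (r_of_u q) * (sinh (r_of_u q) * cosh (r_of_u p) + I * cosh (r_of_u q) * sinh (r_of_u p))).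

Lemma derive_side_cosh I (f g : R -> R) v df dg :
  derivable_pt_lim f v df -> derivable_pt_lim g v dg -> f v < 0 -> g v < 0 ->
  derivable_pt_lim (fun w => side_cosh I (f w) (g w)) v (side_rate I (f v) (g v) df dg).
Proof.
  intros Hf Hg Hfv Hgv.
  assert (Hr : forall h dh, derivable_pt_lim h v dh -> h v < 0 ->
            derivable_pt_lim (fun w => r_of_u (h w)) v (sinh (r_of_u (h v)) * dh)).
  { intros h dh Hh Hhv. now apply dl_comp, derive_r_of_u. }
  assert (Hc : forall h dh, derivable_pt_lim h v dh -> h v < 0 ->
            derivable_pt_lim (fun w => cosh (r_of_u (h w))) v
              (sinh (r_of_u (h v)) * (sinh (r_of_u (h v)) * dh))).
  { intros h dh Hh Hhv.
    apply (dl_comp cosh (fun w => r_of_u (h w))); [now apply Hr | apply derivable_pt_lim_cosh]. }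
  assert (Hs : forall h dh, derivable_pt_lim h v dh -> h v < 0 ->
            derivable_pt_lim (fun w => sinh (r_of_u (h w))) v
              (cosh (r_of_u (h v)) * (sinh (r_of_u (h v)) * dh))).
  { intros h dh Hh Hhv.
    apply (dl_comp sinh (fun w => r_of_u (h w))); [now apply Hr | apply derivable_pt_lim_sinh]. }
  unfold side_cosh. eapply dl_eq.
  2: { apply dl_add; apply dl_mul;
         [exact (Hc f df Hf Hfv) | exact (Hc g dg Hg Hgv) | | exact (Hs g dg Hg Hgv)].
       apply (dl_mul (fun _ => I)); [apply derivable_pt_lim_const | exact (Hs f df Hf Hfv)]. }
  unfold side_rate. ring.
Qed.

Lemma side_cosh_gt1 I p q : 0 <= I -> p < 0 -> q < 0 -> 1 < side_cosh I p q.
Proof.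
  intros HI Hp Hq. unfold side_cosh.
  pose proof (cosh_gt1 _ (r_of_u_pos p Hp)). pose proof (cosh_gt1 _ (r_of_u_pos q Hq)).
  pose proof (sinh_pos _ (r_of_u_pos p Hp)). pose proof (sinh_pos _ (r_of_u_pos q Hq)).
  assert (0 <= I * sinh (r_of_u p) * sinh (r_of_u q)) by (apply Rmult_le_pos; [apply Rmult_le_pos|]; lra).
  nra.
Qed.

Lemma side_rate_pos I p q : 0 <= I -> p < 0 -> q < 0 ->
  0 < side_rate I p q 1 0 /\ 0 < side_rate I p q 0 1.
Proof.
  intros HI Hp Hq. unfold side_rate.
  pose proof (cosh_gt1 _ (r_of_u_pos p Hp)). pose proof (cosh_gt1 _ (r_of_u_pos q Hq)).
  pose proof (sinh_pos _ (r_of_u_pos p Hp)). pose proof (sinh_pos _ (r_of_u_pos q Hq)).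
  set (cp := cosh (r_of_u p)) in *. set (cq := cosh (r_of_u q)) in *.
  set (sp := sinh (r_of_u p)) in *. set (sq := sinh (r_of_u q)) in *.
  assert (0 <= I * cp * sq) by (apply Rmult_le_pos; [apply Rmult_le_pos|]; lra).
  assert (0 <= I * cq * sp) by (apply Rmult_le_pos; [apply Rmult_le_pos|]; lra).
  split; nra.
Qed.

Lemma side_rate_zero I p q : side_rate I p q 0 0 = 0.
Proof. unfold side_rate. ring. Qed.

(* The identities between the partial derivatives D_kj = d C_k / d u_j that make
   the Jacobian of the angles symmetric; they only use cosh^2 - sinh^2 = 1. *)
Lemma side_rates_symmetric I12 I23 I31 u1 u2 u3 :
  let C0 := side_cosh I23 u2 u3 in
  let C1 := side_cosh I31 u3 u1 in
  let C2 := side_cosh I12 u1 u2 in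
  let D01 := side_rate I23 u2 u3 1 0 in let D02 := side_rate I23 u2 u3 0 1 in
  let D10 := side_rate I31 u3 u1 0 1 in let D12 := side_rate I31 u3 u1 1 0 in
  let D20 := side_rate I12 u1 u2 1 0 in let D21 := side_rate I12 u1 u2 0 1 in
  (D01 + D02 * C0) * (C1 * C1 - 1) = (D10 + D12 * C1) * (C0 * C0 - 1) /\
  (D01 * C0 + D02) * (C2 * C2 - 1) = (D20 + D21 * C2) * (C0 * C0 - 1) /\
  (D10 * C1 + D12) * (C2 * C2 - 1) = (D20 * C2 + D21) * (C1 * C1 - 1).
Proof.
  cbv zeta. unfold side_cosh, side_rate.
  pose proof (cosh_sinh_sq (r_of_u u1)). pose proof (cosh_sinh_sq (r_of_u u2)).
  pose proof (cosh_sinh_sq (r_of_u u3)).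
  generalize dependent (cosh (r_of_u u1)). generalize dependent (sinh (r_of_u u1)).
  generalize dependent (cosh (r_of_u u2)). generalize dependent (sinh (r_of_u u2)).
  generalize dependent (cosh (r_of_u u3)). generalize dependent (sinh (r_of_u u3)).
  intros. split; [|split]; nsatz.
Qed.

(* The Gram determinant of the cosines c1, c2, c3 of a hyperbolic triangle,
   and the derivative of the angle opposite to c1 along a velocity (d1, d2, d3)
   of the cosines, as given by the hyperbolic law of cosines. *)

Definition gram_det (c1 c2 c3 : R) : R := 1 + 2 * c1 * c2 * c3 - c1 * c1 - c2 * c2 - c3 * c3.

Definition angle_rate (c1 c2 c3 d1 d2 d3 : R) : R :=
  (d1 - (c1 * c2 - c3) / (c2 * c2 - 1) * d2 - (c1 * c3 - c2) / (c3 * c3 - 1) * d3)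
  / sqrt (gram_det c1 c2 c3).

(* The triangle inequalities for l_k = arcosh C_k force a positive Gram
   determinant, since they pin C0 strictly between cosh (l1 - l2) and cosh (l1 + l2). *)
Lemma gram_det_pos_of_triangle C0 C1 C2 : 1 < C0 -> 1 < C1 -> 1 < C2 ->
  arcosh C0 < arcosh C1 + arcosh C2 -> arcosh C1 < arcosh C2 + arcosh C0 ->
  arcosh C2 < arcosh C0 + arcosh C1 -> 0 < gram_det C0 C1 C2.
Proof.
  intros g0 g1 g2 t0 t1 t2.
  destruct (arcosh_spec C0) as [c0 _]; [lra|].
  destruct (arcosh_spec C1) as [c1 s1]; [lra|].
  destruct (arcosh_spec C2) as [c2 s2]; [lra|].
  pose proof (arcosh_nonneg C1 ltac:(lra)). pose proof (arcosh_nonneg C2 ltac:(lra)).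
  assert (Hup : C0 < C1 * C2 + sqrt (C1 * C1 - 1) * sqrt (C2 * C2 - 1)).
  { pose proof (cosh_plus (arcosh C1) (arcosh C2)) as E. rewrite c1, c2, s1, s2 in E.
    rewrite <- E, <- c0. apply cosh_lt; [apply arcosh_nonneg; lra | lra]. }
  assert (Hlow : C1 * C2 - sqrt (C1 * C1 - 1) * sqrt (C2 * C2 - 1) < C0).
  { pose proof (cosh_minus (arcosh C1) (arcosh C2)) as E. rewrite c1, c2, s1, s2 in E.
    rewrite <- E, <- c0.
    destruct (Rle_lt_dec (arcosh C2) (arcosh C1)).
    - apply cosh_lt; lra.
    - rewrite <- cosh_even. apply cosh_lt; lra. }
  pose proof (sqrt_sqrt (C1 * C1 - 1) ltac:(nra)). pose proof (sqrt_sqrt (C2 * C2 - 1) ltac:(nra)).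
  set (a := sqrt (C1 * C1 - 1)) in *. set (b := sqrt (C2 * C2 - 1)) in *.
  assert ((C1 * C2 - C0) * (C1 * C2 - C0) < (a * b) * (a * b)) by nra.
  unfold gram_det. nra.
Qed.

Lemma angle_cosine_complement c1 c2 c3 : 1 < c2 -> 1 < c3 -> 0 <= gram_det c1 c2 c3 ->
  let s2 := sqrt (c2 * c2 - 1) in let s3 := sqrt (c3 * c3 - 1) in
  1 - ((c2 * c3 - c1) / (s2 * s3)) * ((c2 * c3 - c1) / (s2 * s3))
  = (sqrt (gram_det c1 c2 c3) / (s2 * s3)) * (sqrt (gram_det c1 c2 c3) / (s2 * s3)).
Proof.
  intros H2 H3 Hg s2 s3.
  assert (0 < s2) by (apply sqrt_lt_R0; nra). assert (0 < s3) by (apply sqrt_lt_R0; nra).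
  assert (s2 * s2 = c2 * c2 - 1) by (apply sqrt_sqrt; nra).
  assert (s3 * s3 = c3 * c3 - 1) by (apply sqrt_sqrt; nra).
  pose proof (sqrt_sqrt _ Hg).
  set (q := sqrt (gram_det c1 c2 c3)) in *.
  field_simplify_eq; [| split; lra].
  replace (s2 ^ 2) with (c2 * c2 - 1) by (simpl; lra).
  replace (s3 ^ 2) with (c3 * c3 - 1) by (simpl; lra).
  replace (q ^ 2) with (gram_det c1 c2 c3) by (simpl; lra).
  unfold gram_det. ring.
Qed.

Lemma derive_hangle_arcosh (x1 x2 x3 : R -> R) v d1 d2 d3 :
  derivable_pt_lim x1 v d1 -> derivable_pt_lim x2 v d2 -> derivable_pt_lim x3 v d3 ->
  1 < x1 v -> 1 < x2 v -> 1 < x3 v -> 0 < gram_det (x1 v) (x2 v) (x3 v) ->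
  derivable_pt_lim (fun w => hangle (arcosh (x1 w)) (arcosh (x2 w)) (arcosh (x3 w))) v
    (angle_rate (x1 v) (x2 v) (x3 v) d1 d2 d3).
Proof.
  intros H1 H2 H3 g1 g2 g3 Hg. unfold hangle.
  destruct (arcosh_spec (x1 v)) as [e1 _]; [lra|].
  destruct (arcosh_spec (x2 v)) as [e2 f2]; [lra|].
  destruct (arcosh_spec (x3 v)) as [e3 f3]; [lra|].
  pose proof (angle_cosine_complement (x1 v) (x2 v) (x3 v) g2 g3 (Rlt_le _ _ Hg)) as HG.
  cbv zeta in HG.
  set (c1 := x1 v) in *. set (c2 := x2 v) in *. set (c3 := x3 v) in *.
  assert (0 < sqrt (c2 * c2 - 1)) by (apply sqrt_lt_R0; nra).
  assert (0 < sqrt (c3 * c3 - 1)) by (apply sqrt_lt_R0; nra).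
  assert (hs2 : sqrt (c2 * c2 - 1) * sqrt (c2 * c2 - 1) = c2 * c2 - 1) by (apply sqrt_sqrt; nra).
  assert (hs3 : sqrt (c3 * c3 - 1) * sqrt (c3 * c3 - 1) = c3 * c3 - 1) by (apply sqrt_sqrt; nra).
  assert (0 < sqrt (gram_det c1 c2 c3)) by now apply sqrt_lt_R0.
  set (s2 := sqrt (c2 * c2 - 1)) in *. set (s3 := sqrt (c3 * c3 - 1)) in *.
  set (q := sqrt (gram_det c1 c2 c3)) in *.
  set (G := (c2 * c3 - c1) / (s2 * s3)) in *.
  assert (0 < q / (s2 * s3)) by (apply Rdiv_lt_0_compat; nra).
  assert (HB : -1 < G < 1) by nra.
  eapply dl_eq.
  2: { apply (dl_comp acos (fun w => (cosh (arcosh (x2 w)) * cosh (arcosh (x3 w)) - cosh (arcosh (x1 w)))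
                                      / (sinh (arcosh (x2 w)) * sinh (arcosh (x3 w))))).
       - apply dl_div; [apply dl_sub; [apply dl_mul |] | apply dl_mul | ].
         + exact (derive_cosh_arcosh x2 v d2 H2 g2).
         + exact (derive_cosh_arcosh x3 v d3 H3 g3).
         + exact (derive_cosh_arcosh x1 v d1 H1 g1).
         + exact (derive_sinh_arcosh x2 v d2 H2 g2).
         + exact (derive_sinh_arcosh x3 v d3 H3 g3).
         + fold c2 c3. rewrite f2, f3. fold s2 s3. nra.
       - fold c1 c2 c3. rewrite e1, e2, e3, f2, f3. fold s2 s3 G. now apply dl_acos. }
  cbv beta. fold c1 c2 c3. rewrite e1, e2, e3, f2, f3. fold s2 s3 G.
  rewrite HG, sqrt_square by lra.
  unfold angle_rate. fold q. unfold G. rewrite <- hs2, <- hs3.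
  field_simplify_eq; [| repeat split; lra].
  replace (s2 ^ 2) with (c2 * c2 - 1) by (rewrite <- hs2; ring).
  replace (s3 ^ 2) with (c3 * c3 - 1) by (rewrite <- hs3; ring). ring.
Qed.

Definition alpha_rate (C0 C1 C2 e0 e1 e2 : R) (i : nat) : R :=
  match i with
  | 0%nat => angle_rate C0 C1 C2 e0 e1 e2
  | 1%nat => angle_rate C1 C2 C0 e1 e2 e0
  | _ => angle_rate C2 C0 C1 e2 e0 e1
  end.

(* The Jacobian d alpha_i / d u_j, given the cosines C_k and the partial
   derivatives D_kj = d C_k / d u_j (C_k does not depend on u_k). *)
Definition angle_jacobian (C0 C1 C2 D01 D02 D10 D12 D20 D21 : R) (i j : nat) : R :=
  alpha_rate C0 C1 C2
    (match j with 1%nat => D01 | 2%nat => D02 | _ => 0 end)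
    (match j with 0%nat => D10 | 2%nat => D12 | _ => 0 end)
    (match j with 0%nat => D20 | 1%nat => D21 | _ => 0 end) i.

Definition alpha_jacobian (I12 I23 I31 u1 u2 u3 : R) : nat -> nat -> R :=
  angle_jacobian (side_cosh I23 u2 u3) (side_cosh I31 u3 u1) (side_cosh I12 u1 u2)
    (side_rate I23 u2 u3 1 0) (side_rate I23 u2 u3 0 1) (side_rate I31 u3 u1 0 1)
    (side_rate I31 u3 u1 1 0) (side_rate I12 u1 u2 1 0) (side_rate I12 u1 u2 0 1).

Lemma derive_alpha_path I12 I23 I31 (i : nat) (f0 f1 f2 : R -> R) v d0 d1 d2 u1 u2 u3 :
  0 <= I12 -> 0 <= I23 -> 0 <= I31 ->
  derivable_pt_lim f0 v d0 -> derivable_pt_lim f1 v d1 -> derivable_pt_lim f2 v d2 ->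
  f0 v = u1 -> f1 v = u2 -> f2 v = u3 -> u1 < 0 -> u2 < 0 -> u3 < 0 ->
  0 < gram_det (side_cosh I23 u2 u3) (side_cosh I31 u3 u1) (side_cosh I12 u1 u2) ->
  derivable_pt_lim (fun w => alpha I12 I23 I31 i (f0 w) (f1 w) (f2 w)) v
    (alpha_rate (side_cosh I23 u2 u3) (side_cosh I31 u3 u1) (side_cosh I12 u1 u2)
       (side_rate I23 u2 u3 d1 d2) (side_rate I31 u3 u1 d2 d0) (side_rate I12 u1 u2 d0 d1) i).
Proof.
  intros h12 h23 h31 Hf0 Hf1 Hf2 <- <- <- n0 n1 n2 Hg.
  pose proof (derive_side_cosh I23 f1 f2 v d1 d2 Hf1 Hf2 n1 n2) as X0.
  pose proof (derive_side_cosh I31 f2 f0 v d2 d0 Hf2 Hf0 n2 n0) as X1.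
  pose proof (derive_side_cosh I12 f0 f1 v d0 d1 Hf0 Hf1 n0 n1) as X2.
  pose proof (side_cosh_gt1 I23 _ _ h23 n1 n2) as g0.
  pose proof (side_cosh_gt1 I31 _ _ h31 n2 n0) as g1.
  pose proof (side_cosh_gt1 I12 _ _ h12 n0 n1) as g2.
  assert (Hg1 : 0 < gram_det (side_cosh I31 (f2 v) (f0 v)) (side_cosh I12 (f0 v) (f1 v))
                              (side_cosh I23 (f1 v) (f2 v)))
    by (unfold gram_det in *; lra).
  assert (Hg2 : 0 < gram_det (side_cosh I12 (f0 v) (f1 v)) (side_cosh I23 (f1 v) (f2 v))
                              (side_cosh I31 (f2 v) (f0 v)))
    by (unfold gram_det in *; lra).
  destruct i as [|[|i]].
  - exact (derive_hangle_arcosh _ _ _ v _ _ _ X0 X1 X2 g0 g1 g2 Hg).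
  - exact (derive_hangle_arcosh _ _ _ v _ _ _ X1 X2 X0 g1 g2 g0 Hg1).
  - exact (derive_hangle_arcosh _ _ _ v _ _ _ X2 X0 X1 g2 g0 g1 Hg2).
Qed.

Lemma alpha_partials I12 I23 I31 u1 u2 u3 :
  0 <= I12 -> 0 <= I23 -> 0 <= I31 -> u1 < 0 -> u2 < 0 -> u3 < 0 ->
  0 < gram_det (side_cosh I23 u2 u3) (side_cosh I31 u3 u1) (side_cosh I12 u1 u2) ->
  forall i j : nat, (j <= 2)%nat ->
    derivable_pt_lim (section (alpha I12 I23 I31 i) j u1 u2 u3)
      (match j with 0%nat => u1 | 1%nat => u2 | _ => u3 end) (alpha_jacobian I12 I23 I31 u1 u2 u3 i j).
Proof.
  intros h12 h23 h31 n1 n2 n3 Hg i j Hj.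
  destruct j as [|[|[|j]]]; [| | | lia]; eapply dl_eq.
  2: exact (derive_alpha_path I12 I23 I31 i (fun t => t) (fun _ => u2) (fun _ => u3) u1 1 0 0 u1 u2 u3
              h12 h23 h31 (derivable_pt_lim_id u1) (derivable_pt_lim_const u2 u1)
              (derivable_pt_lim_const u3 u1) eq_refl eq_refl eq_refl n1 n2 n3 Hg).
  3: exact (derive_alpha_path I12 I23 I31 i (fun _ => u1) (fun t => t) (fun _ => u3) u2 0 1 0 u1 u2 u3
              h12 h23 h31 (derivable_pt_lim_const u1 u2) (derivable_pt_lim_id u2)
              (derivable_pt_lim_const u3 u2) eq_refl eq_refl eq_refl n1 n2 n3 Hg).
  4: exact (derive_alpha_path I12 I23 I31 i (fun _ => u1) (fun _ => u2) (fun t => t) u3 0 0 1 u1 u2 u3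
              h12 h23 h31 (derivable_pt_lim_const u1 u3) (derivable_pt_lim_const u2 u3)
              (derivable_pt_lim_id u3) eq_refl eq_refl eq_refl n1 n2 n3 Hg).
  all: unfold alpha_jacobian, angle_jacobian; now rewrite side_rate_zero.
Qed.

Definition sym_qform (p q r a b c y0 y1 y2 : R) : R :=
  p * y0 * y0 + q * y1 * y1 + r * y2 * y2 + 2 * a * y0 * y1 + 2 * b * y0 * y2 + 2 * c * y1 * y2.

Definition sym_det (p q r a b c : R) : R :=
  p * (q * r - c * c) - a * (a * r - c * b) + b * (a * c - q * b).

Lemma sq_pos x : x <> 0 -> 0 < x * x.
Proof. intros Hx. exact (Rsqr_pos_lt x Hx). Qed.

(* Sylvester's criterion, by completing the square:
   p M F = M (p y0 + a y1 + b y2)^2 + (M y1 + (p c - a b) y2)^2 + p det y2^2,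
   where M = p q - a^2. *)
Lemma sylvester3 p q r a b c y0 y1 y2 :
  0 < p -> 0 < p * q - a * a -> 0 < sym_det p q r a b c ->
  (y0 <> 0 \/ y1 <> 0 \/ y2 <> 0) -> 0 < sym_qform p q r a b c y0 y1 y2.
Proof.
  intros Hp HM Hd Hy. unfold sym_det, sym_qform in *.
  set (M := p * q - a * a) in *.
  set (dt := p * (q * r - c * c) - a * (a * r - c * b) + b * (a * c - q * b)) in *.
  set (z0 := p * y0 + a * y1 + b * y2). set (z1 := M * y1 + (p * c - a * b) * y2).
  assert (E : p * M * (p * y0 * y0 + q * y1 * y1 + r * y2 * y2 + 2 * a * y0 * y1
                       + 2 * b * y0 * y2 + 2 * c * y1 * y2)
              = M * (z0 * z0) + z1 * z1 + p * dt * (y2 * y2)) by (unfold z0, z1, M, dt; ring).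
  assert (Hsum : 0 < M * (z0 * z0) + z1 * z1 + p * dt * (y2 * y2)).
  { assert (0 <= M * (z0 * z0)) by (apply Rmult_le_pos; nra).
    assert (0 <= z1 * z1) by nra.
    assert (0 <= p * dt * (y2 * y2)) by (apply Rmult_le_pos; nra).
    destruct (Req_dec y2 0) as [z2|z2]; [destruct (Req_dec y1 0) as [w1|w1] |].
    - assert (Ez0 : z0 = p * y0) by (unfold z0; rewrite w1, z2; ring).
      assert (0 < z0 * z0) by (rewrite Ez0; apply sq_pos, Rmult_integral_contrapositive; split; lra).
      assert (0 < M * (z0 * z0)) by (apply Rmult_lt_0_compat; lra). lra.
    - assert (Ez1 : z1 = M * y1) by (unfold z1; rewrite z2; ring).
      assert (0 < z1 * z1) by (rewrite Ez1; apply sq_pos, Rmult_integral_contrapositive; split; lra).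
      lra.
    - assert (0 < p * dt * (y2 * y2))
        by (apply Rmult_lt_0_compat; [apply Rmult_lt_0_compat | apply sq_pos]; lra).
      lra. }
  assert (0 < p * M) by nra. nra.
Qed.

Lemma sylvester3_some_minor p q r a b c y0 y1 y2 :
  0 < p -> 0 < q -> 0 < r -> 0 < sym_det p q r a b c ->
  (0 < p * q - a * a \/ 0 < q * r - c * c \/ 0 < r * p - b * b) ->
  (y0 <> 0 \/ y1 <> 0 \/ y2 <> 0) -> 0 < sym_qform p q r a b c y0 y1 y2.
Proof.
  intros Hp Hq Hr Hd [Hm | [Hm | Hm]] Hy.
  - now apply sylvester3.
  - replace (sym_qform p q r a b c y0 y1 y2) with (sym_qform q r p c a b y1 y2 y0)
      by (unfold sym_qform; ring).
    apply sylvester3; [lra | lra | | tauto].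
    replace (sym_det q r p c a b) with (sym_det p q r a b c) by (unfold sym_det; ring). lra.
  - replace (sym_qform p q r a b c y0 y1 y2) with (sym_qform r p q b c a y2 y0 y1)
      by (unfold sym_qform; ring).
    apply sylvester3; [lra | lra | | tauto].
    replace (sym_det r p q b c a) with (sym_det p q r a b c) by (unfold sym_det; ring). lra.
Qed.

(* For cosines C_k > 1, at most one of the C_i C_j - C_k is negative: if
   C0 C2 < C1 and C1 C2 < C0 then C0 C2^2 < C0, i.e. C2 < 1. *)
Lemma cosh_triple_signs C0 C1 C2 : 1 < C0 -> 1 < C1 -> 1 < C2 ->
  (0 <= C0 * C2 - C1 /\ 0 <= C1 * C2 - C0) \/
  (0 <= C1 * C0 - C2 /\ 0 <= C2 * C0 - C1) \/
  (0 <= C2 * C1 - C0 /\ 0 <= C0 * C1 - C2).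
Proof.
  intros H0 H1 H2.
  destruct (Rle_lt_dec 0 (C0 * C2 - C1)), (Rle_lt_dec 0 (C1 * C2 - C0)),
           (Rle_lt_dec 0 (C0 * C1 - C2));
    try (left; split; lra); try (right; left; split; lra); try (right; right; split; lra); nra.
Qed.

(* Shape of the numerators of the 2x2 principal minors of S. *)
Lemma three_term_pos a b c d s t w : 0 < a -> 0 < b -> 0 < c -> 0 < d ->
  0 <= s -> 0 <= t -> 0 < w -> 0 < a * b * s + a * c * w + d * c * t.
Proof.
  intros. assert (0 <= a * b * s) by (apply Rmult_le_pos; nra).
  assert (0 <= d * c * t) by (apply Rmult_le_pos; nra).
  assert (0 < a * c * w) by (repeat apply Rmult_lt_0_compat; lra). lra.
Qed.

Section AngleJacobian.

Variables C0 C1 C2 D01 D02 D10 D12 D20 D21 : R.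
Hypotheses (hC0 : 1 < C0) (hC1 : 1 < C1) (hC2 : 1 < C2).
Hypotheses (hD01 : 0 < D01) (hD02 : 0 < D02) (hD10 : 0 < D10)
           (hD12 : 0 < D12) (hD20 : 0 < D20) (hD21 : 0 < D21).
Hypothesis hgram : 0 < gram_det C0 C1 C2.
Hypotheses
  (sym01 : (D01 + D02 * C0) * (C1 * C1 - 1) = (D10 + D12 * C1) * (C0 * C0 - 1))
  (sym02 : (D01 * C0 + D02) * (C2 * C2 - 1) = (D20 + D21 * C2) * (C0 * C0 - 1))
  (sym12 : (D10 * C1 + D12) * (C2 * C2 - 1) = (D20 * C2 + D21) * (C1 * C1 - 1)).

(* The entries of S = diag(1/(C_k^2 - 1)) (D_kj) G on and above the diagonal. *)
Let s00 := (D01 * C2 + D02 * C1) / (C0 * C0 - 1).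
Let s11 := (D10 * C2 + D12 * C0) / (C1 * C1 - 1).
Let s22 := (D20 * C1 + D21 * C0) / (C2 * C2 - 1).
Let s01 := (D01 + D02 * C0) / (C0 * C0 - 1).
Let s02 := (D01 * C0 + D02) / (C0 * C0 - 1).
Let s12 := (D10 * C1 + D12) / (C1 * C1 - 1).

Let k0 : 0 < C0 * C0 - 1. Proof. nra. Qed.
Let k1 : 0 < C1 * C1 - 1. Proof. nra. Qed.
Let k2 : 0 < C2 * C2 - 1. Proof. nra. Qed.

Let s10_eq : (D10 + D12 * C1) / (C1 * C1 - 1) = s01.
Proof. unfold s01. field_simplify_eq; lra. Qed.
Let s20_eq : (D20 + D21 * C2) / (C2 * C2 - 1) = s02.
Proof. unfold s02. field_simplify_eq; lra. Qed.
Let s21_eq : (D20 * C2 + D21) / (C2 * C2 - 1) = s12.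
Proof. unfold s12. field_simplify_eq; lra. Qed.

Let diag_pos : 0 < s00 /\ 0 < s11 /\ 0 < s22.
Proof. unfold s00, s11, s22. repeat split; apply Rdiv_lt_0_compat; nra. Qed.

Let det_pos : 0 < sym_det s00 s11 s22 s01 s02 s12.
Proof.
  set (s10 := (D10 + D12 * C1) / (C1 * C1 - 1)). set (s20 := (D20 + D21 * C2) / (C2 * C2 - 1)).
  set (s21 := (D20 * C2 + D21) / (C2 * C2 - 1)).
  assert (E : s00 * (s11 * s22 - s12 * s21) - s01 * (s10 * s22 - s12 * s20)
              + s02 * (s10 * s21 - s11 * s20)
            = (D01 * D12 * D20 + D02 * D10 * D21) * gram_det C0 C1 C2
              / ((C0 * C0 - 1) * (C1 * C1 - 1) * (C2 * C2 - 1))).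
  { unfold s00, s11, s22, s01, s02, s12, s10, s20, s21, gram_det. field. lra. }
  unfold s10, s20, s21 in E. rewrite s10_eq, s20_eq, s21_eq in E.
  unfold sym_det. rewrite E. apply Rdiv_lt_0_compat.
  - apply Rmult_lt_0_compat; [|exact hgram].
    assert (0 < D01 * D12 * D20) by (repeat apply Rmult_lt_0_compat; lra).
    assert (0 < D02 * D10 * D21) by (repeat apply Rmult_lt_0_compat; lra). lra.
  - repeat apply Rmult_lt_0_compat; lra.
Qed.

Let some_minor_pos :
  0 < s00 * s11 - s01 * s01 \/ 0 < s11 * s22 - s12 * s12 \/ 0 < s22 * s00 - s02 * s02.
Proof.
  assert (M01 : s00 * s11 - s01 * ((D10 + D12 * C1) / (C1 * C1 - 1))
     = (D01 * D12 * (C0 * C2 - C1) + D01 * D10 * (C2 * C2 - 1) + D02 * D10 * (C1 * C2 - C0))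
       / ((C0 * C0 - 1) * (C1 * C1 - 1))).
  { unfold s00, s11, s01. field. lra. }
  assert (M12 : s11 * s22 - s12 * ((D20 * C2 + D21) / (C2 * C2 - 1))
     = (D21 * D10 * (C2 * C0 - C1) + D21 * D12 * (C0 * C0 - 1) + D20 * D12 * (C1 * C0 - C2))
       / ((C1 * C1 - 1) * (C2 * C2 - 1))).
  { unfold s11, s22, s12. field. lra. }
  assert (M20 : s22 * s00 - ((D20 + D21 * C2) / (C2 * C2 - 1)) * s02
     = (D20 * D01 * (C2 * C1 - C0) + D20 * D02 * (C1 * C1 - 1) + D21 * D02 * (C0 * C1 - C2))
       / ((C2 * C2 - 1) * (C0 * C0 - 1))).
  { unfold s22, s00, s02. field. lra. }
  rewrite s10_eq in M01. rewrite s21_eq in M12. rewrite s20_eq in M20.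
  destruct (cosh_triple_signs C0 C1 C2 hC0 hC1 hC2) as [[Hs Ht] | [[Hs Ht] | [Hs Ht]]].
  - left. rewrite M01.
    apply Rdiv_lt_0_compat; [apply three_term_pos | apply Rmult_lt_0_compat]; lra.
  - right; left. rewrite M12.
    apply Rdiv_lt_0_compat; [apply three_term_pos | apply Rmult_lt_0_compat]; lra.
  - right; right. rewrite M20.
    apply Rdiv_lt_0_compat; [apply three_term_pos | apply Rmult_lt_0_compat]; lra.
Qed.

(* The coordinates of y = adj(G) x, for G the Gram matrix of the cosines. *)
Let adj0 (x : nat -> R) : R :=
  (1 - C0 * C0) * x 0%nat + (C0 * C1 - C2) * x 1%nat + (C2 * C0 - C1) * x 2%nat.
Let adj1 (x : nat -> R) : R :=
  (C0 * C1 - C2) * x 0%nat + (1 - C1 * C1) * x 1%nat + (C1 * C2 - C0) * x 2%nat.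
Let adj2 (x : nat -> R) : R :=
  (C2 * C0 - C1) * x 0%nat + (C1 * C2 - C0) * x 1%nat + (1 - C2 * C2) * x 2%nat.

(* adj(G) is invertible since G adj(G) = det(G) Id and det G > 0. *)
Let adj_nonzero (x : nat -> R) : (x 0%nat <> 0 \/ x 1%nat <> 0 \/ x 2%nat <> 0) ->
  adj0 x <> 0 \/ adj1 x <> 0 \/ adj2 x <> 0.
Proof.
  intros Hx.
  destruct (Req_dec (adj0 x) 0) as [w0|w0]; [|tauto].
  destruct (Req_dec (adj1 x) 0) as [w1|w1]; [|tauto].
  destruct (Req_dec (adj2 x) 0) as [w2|w2]; [|tauto].
  exfalso.
  assert (E0 : gram_det C0 C1 C2 * x 0%nat = adj0 x + C2 * adj1 x + C1 * adj2 x)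
    by (unfold gram_det, adj0, adj1, adj2; ring).
  assert (E1 : gram_det C0 C1 C2 * x 1%nat = C2 * adj0 x + adj1 x + C0 * adj2 x)
    by (unfold gram_det, adj0, adj1, adj2; ring).
  assert (E2 : gram_det C0 C1 C2 * x 2%nat = C1 * adj0 x + C0 * adj1 x + adj2 x)
    by (unfold gram_det, adj0, adj1, adj2; ring).
  rewrite w0, w1, w2 in E0, E1, E2.
  destruct Hx as [Hx | [Hx | Hx]]; apply Hx; apply (Rmult_eq_reg_l (gram_det C0 C1 C2)); lra.
Qed.

Let angle_form_identity (x : nat -> R) :
  sum_f_R0 (fun i => sum_f_R0 (fun j =>
      x i * angle_jacobian C0 C1 C2 D01 D02 D10 D12 D20 D21 i j * x j) 2) 2
  = - sym_qform s00 s11 s22 s01 s02 s12 (adj0 x) (adj1 x) (adj2 x)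
    / (sqrt (gram_det C0 C1 C2) * gram_det C0 C1 C2).
Proof.
  assert (q : 0 < sqrt (gram_det C0 C1 C2)) by now apply sqrt_lt_R0.
  replace (sym_qform s00 s11 s22 s01 s02 s12 (adj0 x) (adj1 x) (adj2 x)) with
    (s00 * adj0 x * adj0 x + s01 * adj0 x * adj1 x + s02 * adj0 x * adj2 x
     + (D10 + D12 * C1) / (C1 * C1 - 1) * adj1 x * adj0 x + s11 * adj1 x * adj1 x
     + s12 * adj1 x * adj2 x + (D20 + D21 * C2) / (C2 * C2 - 1) * adj2 x * adj0 x
     + (D20 * C2 + D21) / (C2 * C2 - 1) * adj2 x * adj1 x + s22 * adj2 x * adj2 x)
    by (rewrite s10_eq, s20_eq, s21_eq; unfold sym_qform; ring).
  simpl. unfold angle_rate.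
  replace (gram_det C1 C2 C0) with (gram_det C0 C1 C2) by (unfold gram_det; ring).
  replace (gram_det C2 C0 C1) with (gram_det C0 C1 C2) by (unfold gram_det; ring).
  unfold s00, s11, s22, s01, s02, s12, adj0, adj1, adj2.
  set (g := gram_det C0 C1 C2) in *. set (r := sqrt g) in *. unfold g, gram_det in *.
  field. repeat split; lra.
Qed.

Lemma angle_jacobian_neg_def : neg_def3 (angle_jacobian C0 C1 C2 D01 D02 D10 D12 D20 D21).
Proof.
  intros x Hx. rewrite angle_form_identity.
  assert (0 < sqrt (gram_det C0 C1 C2)) by now apply sqrt_lt_R0.
  destruct diag_pos as (p0 & p1 & p2).
  pose proof (sylvester3_some_minor _ _ _ _ _ _ _ _ _ p0 p1 p2 det_pos some_minor_pos
                (adj_nonzero x Hx)) as Hpos.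
  assert (0 < sqrt (gram_det C0 C1 C2) * gram_det C0 C1 C2) by (apply Rmult_lt_0_compat; lra).
  unfold Rdiv. rewrite Ropp_mult_distr_l_reverse. apply Ropp_lt_gt_0_contravar.
  apply Rmult_lt_0_compat; [exact Hpos | now apply Rinv_0_lt_compat].
Qed.

End AngleJacobian.

Theorem lemma3p4 (I12 I23 I31 : R) (h12 : 0 <= I12) (h23 : 0 <= I23) (h31 : 0 <= I31)
  (u1 u2 u3 : R) (hU : U_H123 I12 I23 I31 u1 u2 u3) :
  exists J : nat -> nat -> R,
    (forall i j : nat, (i <= 2)%nat -> (j <= 2)%nat ->
       derivable_pt_lim (section (alpha I12 I23 I31 i) j u1 u2 u3)
         (match j with 0%nat => u1 | 1%nat => u2 | _ => u3 end) (J i j)) /\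
    neg_def3 J.
Proof.
  destruct hU as (n1 & n2 & n3 & t0 & t1 & t2).
  pose proof (side_cosh_gt1 I23 _ _ h23 n2 n3) as g0.
  pose proof (side_cosh_gt1 I31 _ _ h31 n3 n1) as g1.
  pose proof (side_cosh_gt1 I12 _ _ h12 n1 n2) as g2.
  assert (Hg : 0 < gram_det (side_cosh I23 u2 u3) (side_cosh I31 u3 u1) (side_cosh I12 u1 u2))
    by (apply gram_det_pos_of_triangle; assumption).
  exists (alpha_jacobian I12 I23 I31 u1 u2 u3). split.
  - intros i j _. now apply alpha_partials.
  - destruct (side_rate_pos I23 u2 u3 h23 n2 n3) as [p01 p02].
    destruct (side_rate_pos I31 u3 u1 h31 n3 n1) as [p12 p10].
    destruct (side_rate_pos I12 u1 u2 h12 n1 n2) as [p20 p21].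
    destruct (side_rates_symmetric I12 I23 I31 u1 u2 u3) as (s01 & s02 & s12).
    now apply angle_jacobian_neg_def.
Qed.
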